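(* Let $A_1,\dots,A_N\in\mathbb{R}^{2\times2}$ with $\det[A_j,A_k]=0$ for all $j\ne k$, and assume $A_1$ has non-real eigenvalues. Then there exists $S\in GL(2,\mathbb{R})$ such that $$S^{-1}A_jS=\begin{pmatrix}s_j&-t_j\\t_j&s_j\end{pmatrix},\qquad j=1,\dots,N,$$ for some $s_j,t_j\in\mathbb{R}$.
   Context: $[A,B]=AB-BA$. *)

From mathcomp Require Import all_boot all_algebra.
From mathcomp Require Export complex.
From mathcomp Require Import reals.
Set Implicit Arguments.
Unset Strict Implicit.
Import GRing.Theory Num.Theory ComplexField.
Local Open Scope ring_scope.
Local Open Scope complex_scope.

Definition commmx (R : pzRingType) (n : nat) (A B : 'M[R]_n) : 'M[R]_n :=
  A *m B - B *m A.

Definition cplx_mx (R : rcfType) (m n : nat) (A : 'M[R]_(m, n)) : 'M[R[i]]_(m, n) :=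
  map_mx (fun x => x%:C) A.

Definition nonreal_eigenvalues (R : rcfType) (n : nat) (A : 'M[R]_n) : Prop :=
  forall z : R[i], eigenvalue (cplx_mx A) z -> complex.Im z != 0.

From mathcomp Require Import all_boot all_algebra.
From mathcomp Require Import all_order reals ring lra.
Import Order.TTheory GRing.Theory Num.Theory.
Local Open Scope ring_scope.

(* Since A_1 has non-real eigenvalues, its discriminant tr(A)^2 - 4 det(A)
   is negative, so A_1 is similar to a rotation-scaling matrix
   [[s, -t], [t, s]].  For such an A, -4 A_10^2 det [B, A] is a
   positive-definite quadratic form in two linear expressions in B that
   vanish exactly when B = l A + m I; so commuting determinants force every
   A_j into the span of A_1 and I, and the matrix normalising A_1 normalises
   all of them. *)

Lemma det_mx2 (R : comNzRingType) (M : 'M[R]_2) :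
  \det M = M 0 0 * M 1 1 - M 0 1 * M 1 0.
Proof.
rewrite (expand_det_row _ 0) !big_ord_recl big_ord0 /cofactor !det_mx11 !mxE /=.
have -> : lift 0 0 = 1 :> 'I_2 by apply: val_inj.
have -> : lift 1 0 = 0 :> 'I_2 by apply: val_inj.
have -> : ord0 = 0 :> 'I_2 by apply: val_inj.
by rewrite expr0 expr1; ring.
Qed.

Lemma mulmx2E (R : comNzRingType) (M N : 'M[R]_2) i j :
  (M *m N) i j = M i 0 * N 0 j + M i 1 * N 1 j.
Proof.
rewrite mxE !big_ord_recl big_ord0 addr0.
have -> : lift ord0 ord0 = 1 :> 'I_2 by apply: val_inj.
by have -> : ord0 = 0 :> 'I_2 by apply: val_inj.
Qed.

Lemma ord2P (i : 'I_2) : i = 0 \/ i = 1.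
Proof. by case: i => [[|[|//]]] hi; [left|right]; apply: val_inj. Qed.

Definition rotscale {R : pzRingType} (s t : R) : 'M[R]_2 :=
  \matrix_(a < 2, b < 2) (if a == b then s else if a == 0 then - t else t).

Lemma rotscale_affine (R : comNzRingType) (l m s t : R) :
  l *: rotscale s t + m%:M = rotscale (l * s + m) (l * t).
Proof.
apply/matrixP => i j; rewrite !mxE.
by case: (ord2P i) => ->; case: (ord2P j) => -> /=; rewrite ?mulr1n ?mulr0n; ring.
Qed.

Section Discriminant.

Context {R : rcfType}.

Definition disc2 (A : 'M[R]_2) : R := (A 0 0 - A 1 1) ^+ 2 + 4 * (A 0 1 * A 1 0).

Lemma disc2_lt0_offdiag {A : 'M[R]_2} : disc2 A < 0 -> A 1 0 != 0.
Proof.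
apply: contraTneq => A10; rewrite /disc2 A10 !mulr0 addr0 -leNgt.
exact: sqr_ge0.
Qed.

(* If disc2 A >= 0, the real number (tr A + sqrt (disc2 A)) / 2 is a root
   of the characteristic polynomial. *)
Lemma nonreal_eigenvalues_disc2 {A : 'M[R]_2} :
  nonreal_eigenvalues A -> disc2 A < 0.
Proof.
move=> nonrealA; rewrite ltNge; apply/negP => disc_ge0.
pose l := (A 0 0 + A 1 1 + Num.sqrt (disc2 A)) / 2.
have sqrt_sq : Num.sqrt (disc2 A) ^+ 2 = disc2 A by rewrite sqr_sqrtr.
suff /nonrealA : eigenvalue (cplx_mx A) (l%:C)%C by rewrite eqxx.
rewrite /eigenvalue /eigenspace kermx_eq0 row_free_unit unitmxE unitfE negbK.
have -> : cplx_mx A - (l%:C)%C%:M = map_mx (real_complex R) (A - l%:M).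
  by rewrite map_mxB /= map_scalar_mx.
rewrite det_map_mx fmorph_eq0 det_mx2 !mxE /=; apply/eqP.
move: sqrt_sq; rewrite /l /disc2; set r := Num.sqrt _; nra.
Qed.

Lemma sqr_sub_neg_mul_eq0 (D u v : R) :
  D < 0 -> u ^+ 2 - D * v ^+ 2 = 0 -> u = 0 /\ v = 0.
Proof.
move=> D_lt0 uv0; have u2_ge0 := sqr_ge0 u; have v2_ge0 := sqr_ge0 v.
have /eqP : v ^+ 2 = 0 by nra.
rewrite sqrf_eq0 => /eqP v0; split => //.
by apply/eqP; rewrite -sqrf_eq0; apply/eqP; move: uv0; rewrite v0; lra.
Qed.

(* With p := c y - b z and q := c (x - w) - (a - d) z for A = [[a,b],[c,d]]
   and B = [[x,y],[z,w]], one has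
   -4 c^2 det [B, A] = (2 c p + (a - d) q)^2 - disc2 A * q^2. *)
Lemma det_commmx_eq0_affine (A B : 'M[R]_2) :
  disc2 A < 0 -> \det (commmx B A) = 0 -> exists l m, B = l *: A + m%:M.
Proof.
move=> discA detBA; have A10 := disc2_lt0_offdiag discA.
set p := A 1 0 * B 0 1 - A 0 1 * B 1 0.
set q := A 1 0 * (B 0 0 - B 1 1) - (A 0 0 - A 1 1) * B 1 0.
have [pq0 q0] : 2 * A 1 0 * p + (A 0 0 - A 1 1) * q = 0 /\ q = 0.
  apply: (sqr_sub_neg_mul_eq0 _ _ _ discA).
  transitivity (- 4 * A 1 0 ^+ 2 * \det (commmx B A)); last by rewrite detBA mulr0.
  have subE (M N : 'M[R]_2) i j : (M - N) i j = M i j - N i j by rewrite !mxE.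
  rewrite det_mx2 /commmx !subE !mulmx2E /disc2 /p /q; ring.
move/eqP: pq0; rewrite q0 mulr0 addr0 -mulrA mulf_eq0 pnatr_eq0 /=.
rewrite mulf_eq0 (negbTE A10) /= => /eqP p0.
pose l := B 1 0 / A 1 0.
exists l, (B 1 1 - l * A 1 1); apply/matrixP => i j; rewrite !mxE.
have lA10 : l * A 1 0 = B 1 0 by rewrite mulfVK.
case: (ord2P i) => ->; case: (ord2P j) => -> /=; rewrite ?mulr1n ?mulr0n.
- by apply: (mulfI A10); move: q0; rewrite /q -lA10; lra.
- by apply: (mulfI A10); move: p0; rewrite /p -lA10; lra.
- by rewrite lA10 addr0.
- by rewrite addrC subrK.
Qed.

(* S = [Im v, Re v] for the complex eigenvector v = ((a - d) / 2 + i t, c)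
   of A = [[a, b], [c, d]] for the eigenvalue (a + d) / 2 + i t. *)
Lemma disc2_lt0_similar_rotscale {A : 'M[R]_2} : disc2 A < 0 ->
  exists2 S : 'M[R]_2, S \in unitmx &
    exists s t : R, invmx S *m A *m S = rotscale s t.
Proof.
move=> discA; have A10 := disc2_lt0_offdiag discA.
pose t := Num.sqrt (- disc2 A) / 2.
have t2 : t * t = - disc2 A / 4.
  by rewrite -expr2 expr_div_n sqr_sqrtr ?oppr_ge0 ?ltW // -natrX.
have t_neq0 : t != 0.
  by rewrite mulf_eq0 invr_eq0 pnatr_eq0 orbF sqrtr_eq0 -ltNge oppr_gt0.
pose S : 'M[R]_2 := \matrix_(i < 2, j < 2)
  if i == 0 then (if j == 0 then t else (A 0 0 - A 1 1) / 2)
  else (if j == 0 then 0 else A 1 0).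
have S_unit : S \in unitmx.
  by rewrite unitmxE unitfE det_mx2 !mxE /= mulr0 subr0 mulf_neq0.
exists S => //; exists ((A 0 0 + A 1 1) / 2), t.
suff AS : A *m S = S *m rotscale ((A 0 0 + A 1 1) / 2) t.
  by rewrite -mulmxA AS mulmxA mulVmx // mul1mx.
move: t2; rewrite /disc2 => t2.
apply/matrixP => i j; rewrite !mulmx2E !mxE.
by case: (ord2P i) => ->; case: (ord2P j) => -> /=; rewrite -/t; nra.
Qed.

End Discriminant.

Theorem lemma2p8 (R : realType) (N : nat) (A : 'I_N.+1 -> 'M[R]_2) :
  (forall j k : 'I_N.+1, j != k -> \det (commmx (A j) (A k)) = 0) ->
  nonreal_eigenvalues (A ord0) ->
  exists2 S : 'M[R]_2, S \in unitmx &
    forall j : 'I_N.+1, exists s t : R,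
      invmx S *m A j *m S = \matrix_(a < 2, b < 2)
        (if a == b then s else if a == 0 then - t else t).
Proof.
move=> commA nonrealA0.
have disc0 := nonreal_eigenvalues_disc2 nonrealA0.
have [S S_unit [s [t A0S]]] := disc2_lt0_similar_rotscale disc0.
exists S => // j.
have [l [m ->]] : exists l m, A j = l *: A ord0 + m%:M.
  have [->|/commA] := eqVneq j ord0; last exact: det_commmx_eq0_affine.
  by exists 1, 0; rewrite scale1r raddf0 addr0.
exists (l * s + m), (l * t); rewrite -[RHS]/(rotscale _ _) -rotscale_affine -A0S.
rewrite mulmxDr mulmxDl -scalemxAr -scalemxAl scalar_mxC.
by rewrite -[m%:M *m _ *m _]mulmxA mulVmx // mulmx1.
Qed.
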